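(* In the shallow setting of the context, assume there exists $M>0$ such that $$\max_{h=1,\ldots,n_2}\Big|\sigma^{(s_h)}\Big(b+\sum_{r=1}^{n_0}w_rx_{\alpha,r}\Big)w_1^{s_h}\Big|\le M\Big(1+\Big|b+\sum_{r=1}^{n_0}w_rx_{\alpha,r}\Big|\Big)$$ for every $\alpha\in A$ and every $b,w_1,\ldots,w_{n_0}\in\mathbb{R}$. Then $\Upsilon(\cdot;\underline{x})$ is finite in a neighborhood of the origin of $\mathbb{R}^{|A|\times n_2}$.
   Context: Fix integers $n_0,n_2\ge1$, constants $C_b\ge0$, $C_W>0$, a function $\sigma:\mathbb{R}\to\mathbb{R}$, a finite set $A$ and inputs $x_\alpha=(x_{\alpha,1},\ldots,x_{\alpha,n_0})\in\mathbb{R}^{n_0}$, $\alpha\in A$ ($\underline{x}=\{x_\alpha\}$). Fix $s_1,\ldots,s_{n_2}\in\{0,1\}$; unless all $s_h=0$, $\sigma$ is assumed almost everywhere differentiable with a.e. derivative $\sigma^{(1)}=\sigma'$; $\sigma^{(0)}=\sigma$. Let $b^{(1)}_1$ be centered Normal with variance $C_b$, $W^{(1)}_{1r}$ ($r=1,\ldots,n_0$) centered Normal with variance $C_W/n_0$, and $\widehat W^{(2)}_{h1}$ ($h=1,\ldots,n_2$) standard Normal, all independent. Set $F_{h1}(x):=\sqrt{C_W}\widehat W^{(2)}_{h1}\sigma^{(s_h)}(b^{(1)}_1+\sum_{r=1}^{n_0}W^{(1)}_{1r}x_r)(W^{(1)}_{11})^{s_h}$ and, for $\theta\in\mathbb{R}^{|A|\times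 n_2}$, $\Upsilon(\theta;\underline{x}):=\log\mathbb{E}[\exp(\sum_{\alpha\in A}\sum_{h=1}^{n_2}\theta_{\alpha h}F_{h1}(x_\alpha))]$, which equals $\log\mathbb{E}[\exp(\frac{C_W}{2}\sum_{h=1}^{n_2}(\sum_{\alpha\in A}\theta_{\alpha h}\sigma^{(s_h)}(b^{(1)}_1+\sum_rW^{(1)}_{1r}x_{\alpha,r})(W^{(1)}_{11})^{s_h})^2)]$. *)

From HB Require Import structures.
From mathcomp Require Import all_boot all_order all_algebra.
From mathcomp Require Import all_classical all_reals all_analysis.
Set Implicit Arguments. Unset Strict Implicit. Unset Printing Implicit Defensive.
Import Order.TTheory GRing.Theory Num.Theory.
Import numFieldNormedType.Exports.
Local Open Scope classical_set_scope.
Local Open Scope ring_scope.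

(* Mutual independence of a finite family of real random variables:
   product rule for all families of Borel sets (taking B i = setT for the
   indices not involved gives the product rule for every subfamily). *)
Definition mutually_independent {d} {T : measurableType d} {R : realType}
  (P : probability T R) (I : finType) (X : I -> T -> R) : Prop :=
  forall B : I -> set R, (forall i, measurable (B i)) ->
    P [set w | forall i, B i (X i w)] = (\prod_(i : I) P (X i @^-1` B i))%E.

(* X is a centered Normal random variable with variance v >= 0;
   variance 0 means X = 0 almost surely (law = Dirac at 0). *)
Definition centered_normal_rv {d} {T : measurableType d} {R : realType}
  (P : probability T R) (X : T -> R) (v : R) : Prop :=
  measurable_fun setT X /\
  forall A : set R, measurable A ->
    P (X @^-1` A) = (if v == 0 then \d_(0 : R) A else normal_prob 0 (Num.sqrt v) A).

(* sigma^{(0)} = sigma, sigma^{(1)} = sigma' *)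
Definition sigma_s {R : realType} (sigma sigma' : R -> R) (s : bool) : R -> R :=
  if s then sigma' else sigma.

Definition elog {R : realType} (x : \bar R) : \bar R :=
  match x with
  | r%:E => if 0 < r then (ln r)%:E else -oo%E
  | +oo%E => +oo%E
  | -oo%E => -oo%E
  end.

(* first-layer pre-activation  b + sum_r w_r x_r ; index set {1..n0} is 'I_n0.+1 *)
Definition preact {R : realType} (n0 : nat) (b : R) (w : 'I_n0.+1 -> R)
  (x : 'I_n0.+1 -> R) : R := b + \sum_(r < n0.+1) w r * x r.

Definition F_h1 {R : realType} (n0 : nat) (CW : R) (sigma sigma' : R -> R)
  (s : bool) (Wh : R) (b : R) (w : 'I_n0.+1 -> R) (x : 'I_n0.+1 -> R) : R :=
  Num.sqrt CW * Wh * sigma_s sigma sigma' s (preact b w x) * (w ord0) ^+ s.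

Definition Upsilon {d} {T : measurableType d} {R : realType} (P : probability T R)
  (n0 n2 : nat) (CW : R) (sigma sigma' : R -> R) (s : 'I_n2 -> bool)
  (A : finType) (x : A -> 'I_n0.+1 -> R)
  (b : T -> R) (W : 'I_n0.+1 -> T -> R) (Wh : 'I_n2 -> T -> R)
  (theta : A -> 'I_n2 -> R) : \bar R :=
  elog ('E_P[fun w => expR (\sum_(a : A) \sum_(h < n2)
          theta a h * F_h1 CW sigma sigma' (s h) (Wh h w) (b w)
                        (fun r => W r w) (x a))])%E.

Definition all_params {T : Type} {R : realType} (n0 n2 : nat) (b : T -> R)
  (W : 'I_n0.+1 -> T -> R) (Wh : 'I_n2 -> T -> R)
  : option ('I_n0.+1 + 'I_n2) -> T -> R :=
  fun i => match i with
           | None => b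
           | Some (inl r) => W r
           | Some (inr h) => Wh h
           end.

From HB Require Import structures.
From mathcomp Require Import all_boot all_order all_algebra.
From mathcomp Require Import all_classical all_reals all_analysis.
From mathcomp Require Import measurable_realfun normal_distribution.
From mathcomp Require Import ring lra.
Set Implicit Arguments. Unset Strict Implicit.
Unset Printing Implicit Defensive.
Import Order.TTheory GRing.Theory Num.Theory.
Import numFieldNormedType.Exports.
Local Open Scope classical_set_scope.
Local Open Scope ring_scope.

(* The growth assumption gives |F_h1(x_a)| <= sqrt(C_W) M X Q^2, where X bounds
   the inputs and Q = 1 + |b| + sum_r |W_1r| + sum_h |hat W_h1|; so for
   |theta| <= eps the exponent is at most eps K Q^2.  Each summand is integrable as soon as
   s v <= 1/4, where v = Var Y_j and s = eps K m^2, because exp(s y^2) times the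
   centered normal density of variance v is then at most a constant times the
   normal density of variance 2v.  The expectation is also positive, so its
   logarithm is finite. *)

Lemma big_option (V : nmodType) (I : finType) (F : option I -> V) :
  \sum_(i : option I) F i = F None + \sum_(i : I) F (Some i).
Proof.
rewrite (bigD1 None) //=; congr (_ + _).
rewrite (reindex_omap Some id) => [|[]] //=.
by apply: eq_bigl => i; rewrite eqxx.
Qed.

Lemma ler_sum_term (R : numDomainType) (I : finType) (F : I -> R) (i : I) :
  (forall j, 0 <= F j) -> F i <= \sum_j F j.
Proof. by move=> F0; rewrite (bigD1 i) //= lerDl sumr_ge0. Qed.

Lemma expR_sqr_sumr_le (R : realType) (J : finType) (j0 : J) (c : R)
    (F : J -> R) :
  0 <= c ->
  expR (c * (\sum_j `|F j|) ^+ 2) <= \sum_j expR (c * #|J|%:R ^+ 2 * F j ^+ 2).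
Proof.
move=> c0; have [k _ Fk] := @arg_maxP _ _ J j0 xpredT (fun j => `|F j|) isT.
have sumF : \sum_j `|F j| <= #|J|%:R * `|F k|.
  rewrite (le_trans (ler_sum _ (fun j _ => Fk j isT))) //.
  by rewrite sumr_const mulr_natl.
apply: (@le_trans _ _ (expR (c * #|J|%:R ^+ 2 * F k ^+ 2))).
  rewrite ler_expR -mulrA ler_wpM2l // -[F k ^+ 2]real_normK ?num_real //.
  by rewrite -exprMn ler_sqr ?nnegrE ?sumr_ge0 ?mulr_ge0.
by apply: ler_sum_term => j; exact: expR_ge0.
Qed.

Section integral_density.
Context d (T : measurableType d) (R : realType).
Variables (mu nu : {measure set T -> \bar R}) (g : T -> R).
Hypotheses (g0 : forall x, 0 <= g x) (mg : measurable_fun setT g).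
Hypothesis nuE :
  forall A, measurable A -> nu A = (\int[mu]_(x in A) (g x)%:E)%E.
Import HBNNSimple.
Local Open Scope ereal_scope.

Let integral_density_indic (A : set T) (y : R) : measurable A -> (0 <= y)%R ->
  \int[mu]_x ((y * \1_A x)%:E * (g x)%:E) = y%:E * nu A.
Proof.
move=> mA y0.
rewrite nuE // (integral_mkcond A) epatch_indic -ge0_integralZl //=.
- by apply: eq_integral => x _; rewrite -!EFinM; congr EFin; ring.
- by apply: emeasurable_funM;
    apply/measurable_EFinP => //; exact: measurable_indic.
- by move=> x _; rewrite -EFinM lee_fin mulr_ge0.
Qed.

Lemma integral_density_nnsfun (h : {nnsfun T >-> R}) :
  \int[nu]_x (h x)%:E = \int[mu]_x ((h x)%:E * (g x)%:E).
Proof.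
rewrite integralT_nnsfun sintegralE.
under [RHS]eq_integral => x _.
  rewrite fimfunE -fsumEFin // ge0_mule_fsuml => [|y]; last first.
    exact: nnfun_muleindic_ge0.
  over.
rewrite ge0_integral_fsum //.
- apply: eq_fsbigr => y /[!inE] -[x _ <-].
  by rewrite integral_density_indic.
- move=> y; apply: emeasurable_funM; apply: measurableT_comp => //.
  exact: measurable_funM.
- by move=> y x _; rewrite mule_ge0 ?lee_fin //; exact: nnfun_muleindic_ge0.
Qed.

Lemma ge0_integral_density (f : T -> \bar R) : (forall x, 0 <= f x) ->
  measurable_fun setT f -> \int[nu]_x f x = \int[mu]_x (f x * (g x)%:E).
Proof.
move=> f0 mf; pose h := nnsfun_approx measurableT mf.
have hf x : (EFin \o h^~ x) @ \oo --> f x by exact: cvg_nnsfun_approx.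
have mh n : measurable_fun setT (EFin \o h n).
  by apply/measurable_EFinP; exact: measurable_funPT.
have nd_h x : {homo (h^~ x) : m n / (m <= n)%N >-> (m <= n)%R}.
  by move=> m n mn; exact/lefP/nd_nnsfun_approx.
transitivity (limn (fun n => \int[nu]_x (h n x)%:E)).
  rewrite -monotone_convergence //.
  - by apply: eq_integral => x _; apply/esym/cvg_lim => //; exact: hf.
  - by move=> n x _; rewrite lee_fin.
  - by move=> x _ m n mn; rewrite lee_fin nd_h.
transitivity (limn (fun n => \int[mu]_x ((h n x)%:E * (g x)%:E))).
  by congr (limn _); apply/funext => n; exact: integral_density_nnsfun.
rewrite -monotone_convergence //.
- apply: eq_integral => x _; apply/cvg_lim => //.
  by apply: cvgeZr; [by []|exact: hf].
- by move=> n; apply: emeasurable_funM => //; exact/measurable_EFinP.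
- by move=> n x _; rewrite mule_ge0 ?lee_fin.
- by move=> x _ m n mn; rewrite lee_wpmul2r ?lee_fin ?nd_h.
Qed.

End integral_density.

Lemma expR_sqr_normal_pdf_le (R : realType) (v s y : R) :
  0 < v -> 0 <= s -> s * v <= 4^-1 ->
  expR (s * y ^+ 2) * normal_pdf 0 (Num.sqrt v) y <=
  normal_peak (Num.sqrt v) / normal_peak (Num.sqrt (v * 2)) *
    normal_pdf 0 (Num.sqrt (v * 2)) y.
Proof.
move=> v0 s0 sv; have v20 : 0 < v * 2 by rewrite mulr_gt0.
rewrite /normal_pdf !gt_eqF ?sqrtr_gt0 // /normal_fun.
rewrite mulrA divfK ?gt_eqF ?normal_peak_gt0 ?gt_eqF ?sqrtr_gt0 //.
rewrite mulrCA; apply: ler_wpM2l; first exact: normal_peak_ge0.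
rewrite -expRD ler_expR !sqr_sqrtr ?(ltW v0) ?(ltW v20) // subr0.
have -> : - y ^+ 2 / ((v * 2) *+ 2) = - y ^+ 2 / (v *+ 2) + y ^+ 2 / (v * 4).
  by field; rewrite gt_eqF.
rewrite addrC lerD2l ler_pdivlMr ?mulr_gt0 //.
have -> : s * y ^+ 2 * (v * 4) = 4 * (s * v) * y ^+ 2 by ring.
by apply: ler_piMl; [exact: sqr_ge0|lra].
Qed.

Lemma measurable_expR_sqr (R : realType) (s : R) :
  measurable_fun setT (fun y : R => expR (s * y ^+ 2)).
Proof. by apply: measurableT_comp => //; exact: measurable_funM. Qed.

Lemma normal_prob_expR_sqr_lty (R : realType) (v s : R) :
  0 < v -> 0 <= s -> s * v <= 4^-1 ->
  (\int[normal_prob 0 (Num.sqrt v)]_y (expR (s * y ^+ 2))%:E < +oo)%E.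
Proof.
move=> v0 s0 sv.
pose c := normal_peak (Num.sqrt v) / normal_peak (Num.sqrt (v * 2)).
have c0 : 0 <= c by rewrite divr_ge0 ?normal_peak_ge0.
rewrite (@ge0_integral_density _ _ _ lebesgue_measure _
  (normal_pdf 0 (Num.sqrt v))) //.
all: try (by move=> y; rewrite lee_fin expR_ge0).
all: try exact: normal_pdf_ge0.
all: try exact: measurable_normal_pdf.
2: by apply/measurable_EFinP; exact: measurable_expR_sqr.
apply: (le_lt_trans (y := \int[lebesgue_measure]_y
    (c%:E * (normal_pdf 0 (Num.sqrt (v * 2)) y)%:E))%E).
  apply: ge0_le_integral => //.
  - by move=> y _; rewrite -EFinM lee_fin mulr_ge0 ?expR_ge0 ?normal_pdf_ge0.
  - apply/measurable_EFinP; apply: measurable_funM.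
      exact: measurable_expR_sqr.
    exact: measurable_normal_pdf.
  - apply/measurable_EFinP; apply: measurable_funM => //.
    exact: measurable_normal_pdf.
  - by move=> y _; rewrite -!EFinM lee_fin expR_sqr_normal_pdf_le.
rewrite ge0_integralZl //.
- by rewrite integral_normal_pdf mule1 ltry.
- by apply/measurable_EFinP; exact: measurable_normal_pdf.
- by move=> y _; rewrite lee_fin normal_pdf_ge0.
Qed.

Lemma centered_normal_rv_expR_sqr_lty d (T : measurableType d) (R : realType)
    (P : probability T R) (Y : T -> R) (v s : R) :
  centered_normal_rv P Y v -> 0 <= v -> 0 <= s -> s * v <= 4^-1 ->
  (\int[P]_w (expR (s * Y w ^+ 2))%:E < +oo)%E.
Proof.
move=> [mY lawY] v0 s0 sv.
(* [normal_prob] lives on [measurableTypeR R], not on the default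
   measurable structure of [R]. *)
pose Y' : T -> measurableTypeR R := Y.
have mY' : measurable_fun setT Y' := mY.
have mf : measurable_fun setT
    (fun y : measurableTypeR R => (expR (s * y ^+ 2))%:E).
  by apply/measurable_EFinP; exact: measurable_expR_sqr.
have <- : (\int[pushforward P Y']_y (expR (s * y ^+ 2))%:E =
    \int[P]_w (expR (s * Y w ^+ 2))%:E)%E.
  by rewrite ge0_integral_pushforward.
have [v00|vn0] := eqVneq v 0.
  rewrite (eq_measure_integral \d_(0 : measurableTypeR R)) => [|A mA _].
    by rewrite integral_dirac ?diracT ?mul1e ?ltry.
  by transitivity (P (Y @^-1` A)); last by rewrite lawY // v00 eqxx.
rewrite (eq_measure_integral (normal_prob 0 (Num.sqrt v))) => [|A mA _].
  by apply: normal_prob_expR_sqr_lty; rewrite // lt_def vn0.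
by transitivity (P (Y @^-1` A)); last by rewrite lawY // (negbTE vn0).
Qed.

Lemma integral_expR_gt0 d (T : measurableType d) (R : realType)
    (mu : {measure set T -> \bar R}) (f : T -> R) :
  mu setT != 0%E -> measurable_fun setT f ->
  (0 < \int[mu]_w (expR (f w))%:E)%E.
Proof.
move=> mu0 mf; have mexpf : measurable_fun setT (fun w => (expR (f w))%:E).
  by apply/measurable_EFinP; exact: measurableT_comp.
rewrite lt_def integral_ge0 ?andbT => [|w _]; last by rewrite lee_fin expR_ge0.
apply: contra mu0 => /eqP int0.
have [N [mN muN0 subN]] : ae_eq mu setT (fun w => (expR (f w))%:E) (cst 0%E).
  apply/(ae_eq_integral_abs mu measurableT mexpf); rewrite -int0.
  by apply: eq_integral => w _; rewrite gee0_abs // lee_fin expR_ge0.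
suff -> : [set: T] = N by rewrite muN0.
apply/seteqP; split => // w _; apply: subN => /(_ Logic.I) /eqP.
by rewrite eqe gt_eqF ?expR_gt0.
Qed.

Lemma elog_fin_num (R : realType) (x : \bar R) :
  (0 < x)%E -> (x < +oo)%E -> elog x \is a fin_num.
Proof. by case: x => // r; rewrite lte_fin /= => ->. Qed.

Lemma norm_preact_le (R : realType) n0 (bb : R) (w x : 'I_n0.+1 -> R) (X : R) :
  (forall r, `|x r| <= X) -> `|preact bb w x| <= `|bb| + X * \sum_r `|w r|.
Proof.
move=> xX; rewrite (le_trans (ler_normD _ _)) // lerD2l mulr_sumr.
rewrite (le_trans (ler_norm_sum _ _ _)) // ler_sum // => r _.
by rewrite normrM mulrC ler_wpM2r.
Qed.

Lemma norm_F_h1_le (R : realType) n0 (CW M X Q : R) (sigma sigma' : R -> R)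
    (s : bool) (wh bb : R) (w x : 'I_n0.+1 -> R) :
  0 <= M -> 1 <= X -> (forall r, `|x r| <= X) ->
  `|sigma_s sigma sigma' s (preact bb w x) * w ord0 ^+ s| <=
    M * (1 + `|preact bb w x|) ->
  1 + `|bb| + \sum_r `|w r| <= Q -> `|wh| <= Q ->
  `|F_h1 CW sigma sigma' s wh bb w x| <= Num.sqrt CW * M * X * Q ^+ 2.
Proof.
move=> M0 X1 xX sigmaM bbQ whQ.
have sw0 : 0 <= \sum_r `|w r| by rewrite sumr_ge0.
have preQ : 1 + `|preact bb w x| <= X * Q.
  apply: le_trans (_ : 1 + (`|bb| + X * \sum_r `|w r|) <= _).
    by rewrite lerD2l norm_preact_le.
  have bb0 := normr_ge0 bb; nra.
rewrite /F_h1 -mulrA normrM normrM ger0_norm ?sqrtr_ge0 //.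
have -> : Num.sqrt CW * M * X * Q ^+ 2 = Num.sqrt CW * Q * (M * (X * Q)).
  by ring.
rewrite -!mulrA ler_wpM2l ?sqrtr_ge0 // ler_pM //.
by rewrite (le_trans sigmaM) // ler_wpM2l.
Qed.

Section shallow_network.
Context d (T : measurableType d) (R : realType) (P : probability T R).
Variables (n0 n2 : nat) (CW M : R) (sigma sigma' : R -> R) (s : 'I_n2 -> bool).
Variables (A : finType) (x : A -> 'I_n0.+1 -> R).
Variables (b : T -> R) (W : 'I_n0.+1 -> T -> R) (Wh : 'I_n2 -> T -> R).
Hypothesis M0 : 0 <= M.
Hypothesis sigma_growth : forall a bb (w : 'I_n0.+1 -> R) h,
  `|sigma_s sigma sigma' (s h) (preact bb w (x a)) * w ord0 ^+ s h| <=
    M * (1 + `|preact bb w (x a)|).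

Definition network_exponent (theta : A -> 'I_n2 -> R) (w : T) : R :=
  \sum_a \sum_h theta a h *
    F_h1 CW sigma sigma' (s h) (Wh h w) (b w) (fun r => W r w) (x a).

(* Index [None] is the constant 1 coming from the [1 +] of the growth bound. *)
Definition augmented_params (j : option (option ('I_n0.+1 + 'I_n2))) : T -> R :=
  if j is Some i then all_params b W Wh i else cst 1.

Lemma sum_norm_augmented_params w :
  \sum_j `|augmented_params j w| =
    1 + `|b w| + \sum_r `|W r w| + \sum_h `|Wh h w|.
Proof. by rewrite !big_option big_sumType /= normr1 !addrA. Qed.

Let X := 1 + \sum_a \sum_r `|x a r|.

Let X_ge1 : 1 <= X.
Proof. by rewrite lerDl; apply: sumr_ge0 => a _; exact: sumr_ge0. Qed.

Let norm_x_le a r : `|x a r| <= X.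
Proof.
have sum_ge0 a' : 0 <= \sum_r `|x a' r| by rewrite sumr_ge0.
apply: le_trans (ler_sum_term r (fun r' => normr_ge0 (x a r'))) _.
apply: le_trans (ler_sum_term a sum_ge0) _.
by rewrite /X lerDr.
Qed.

Let F_bound := Num.sqrt CW * M * X.

Lemma network_exponent_le theta eps w : (forall a h, `|theta a h| <= eps) ->
  network_exponent theta w <=
    eps * (#|A|%:R * n2%:R * F_bound) * (\sum_j `|augmented_params j w|) ^+ 2.
Proof.
move=> theta_eps; rewrite sum_norm_augmented_params.
set Q := 1 + _ + _ + _.
have term_le a h : theta a h *
    F_h1 CW sigma sigma' (s h) (Wh h w) (b w) (fun r => W r w) (x a) <=
    eps * (F_bound * Q ^+ 2).
  apply: le_trans (ler_norm _) _; rewrite normrM; apply: ler_pM => //.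
  apply: norm_F_h1_le => //; first by rewrite lerDl sumr_ge0.
  apply: le_trans (ler_sum_term h (fun h' => normr_ge0 (Wh h' w))) _.
  by rewrite lerDr !addr_ge0 ?sumr_ge0.
rewrite /network_exponent.
apply: le_trans (ler_sum _ (fun a _ => ler_sum _ (fun h _ => term_le a h))) _.
rewrite !sumr_const card_ord -mulrnA -[_ *+ _]mulr_natl natrM.
rewrite [leRHS](_ : _ = n2%:R * #|A|%:R * (eps * (F_bound * Q ^+ 2))) //.
ring.
Qed.

Definition network_const : R :=
  #|A|%:R * n2%:R * F_bound *
    #|{: option (option ('I_n0.+1 + 'I_n2))}|%:R ^+ 2.

Lemma network_const_ge0 : 0 <= network_const.
Proof.
have X0 : 0 <= X := le_trans ler01 X_ge1.
by rewrite !mulr_ge0 ?sqrtr_ge0 ?exprn_ge0.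
Qed.

Lemma expR_network_exponent_le theta eps w : 0 <= eps ->
  (forall a h, `|theta a h| <= eps) ->
  expR (network_exponent theta w) <=
    \sum_j expR (eps * network_const * augmented_params j w ^+ 2).
Proof.
move=> eps0 theta_eps.
have X0 : 0 <= X := le_trans ler01 X_ge1.
have K0 : 0 <= #|A|%:R * n2%:R * F_bound.
  by rewrite !mulr_ge0 ?sqrtr_ge0.
rewrite /network_const mulrA.
apply: le_trans (expR_sqr_sumr_le None _ (mulr_ge0 eps0 K0)).
by rewrite ler_expR network_exponent_le.
Qed.

Variable Cb : R.
Hypotheses (Cb0 : 0 <= Cb) (CW0 : 0 <= CW).
Hypotheses (msigma : measurable_fun setT sigma)
  (msigma' : measurable_fun setT sigma').
Hypothesis b_normal : centered_normal_rv P b Cb.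
Hypothesis W_normal : forall r, centered_normal_rv P (W r) (CW / n0.+1%:R).
Hypothesis Wh_normal : forall h, centered_normal_rv P (Wh h) 1.

Lemma measurable_network_exponent theta :
  measurable_fun setT (network_exponent theta).
Proof.
have [mb _] := b_normal.
have mW r := (W_normal r).1; have mWh h := (Wh_normal h).1.
apply: measurable_sum => a; apply: measurable_sum => h.
apply: measurable_funM => //; rewrite /F_h1.
apply: measurable_funM; last exact: measurable_funX.
apply: measurable_funM; first exact: measurable_funM.
apply: measurableT_comp; first by rewrite /sigma_s; case: (s h).
apply: measurable_funD => //.
by apply: measurable_sum => r; apply: measurable_funM.
Qed.

Lemma measurable_augmented_params j : measurable_fun setT (augmented_params j).
Proof.
case: j => [[[r|h]|]|] //=.
- by case: (W_normal r).
- by case: (Wh_normal h).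
- by case: b_normal.
Qed.

Lemma augmented_params_expR_sqr_lty c j :
  0 <= c -> c * (Cb + CW + 1) <= 4^-1 ->
  (\int[P]_w (expR (c * augmented_params j w ^+ 2))%:E < +oo)%E.
Proof.
move=> c0 cV; have cv v : 0 <= v -> v <= Cb + CW + 1 -> c * v <= 4^-1.
  by move=> v0 vV; rewrite (le_trans _ cV) // ler_wpM2l.
case: j => [[[r|h]|]|] /=.
- have v0 : 0 <= CW / n0.+1%:R by rewrite divr_ge0.
  apply: centered_normal_rv_expR_sqr_lty (W_normal r) v0 c0 (cv _ v0 _).
  have le_CW : CW / n0.+1%:R <= CW by rewrite ler_pdivrMr // ler_peMr // ler1n.
  by apply: le_trans le_CW _; rewrite addrAC lerDr addr_ge0.
- apply: centered_normal_rv_expR_sqr_lty (Wh_normal h) ler01 c0 _.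
  by rewrite cv // lerDr addr_ge0.
- apply: centered_normal_rv_expR_sqr_lty b_normal Cb0 c0 _.
  by rewrite cv // -addrA lerDl addr_ge0.
- rewrite integral_cst // lte_mul_pinfty ?lee_fin ?expR_ge0 //.
  exact: le_lt_trans (probability_le1 P measurableT) (ltry 1).
Qed.

Lemma integral_expR_network_exponent_lty theta eps : 0 <= eps ->
  eps * network_const * (Cb + CW + 1) <= 4^-1 ->
  (forall a h, `|theta a h| <= eps) ->
  (\int[P]_w (expR (network_exponent theta w))%:E < +oo)%E.
Proof.
move=> eps0 epsV theta_eps; set c := eps * network_const.
have c0 : 0 <= c by rewrite mulr_ge0 ?network_const_ge0.
have mY j : measurable_fun setT (fun w => expR (c * augmented_params j w ^+ 2)).
  apply: measurableT_comp => //; apply: measurable_funM => //.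
  exact/measurable_funX/measurable_augmented_params.
apply: (@le_lt_trans _ _
    (\int[P]_w (\sum_j expR (c * augmented_params j w ^+ 2))%:E)%E).
  apply: ge0_le_integral => //.
  - apply/measurable_EFinP; apply: measurableT_comp => //.
    exact: measurable_network_exponent.
  - by apply/measurable_EFinP; exact: measurable_sum.
  - by move=> w _; rewrite lee_fin expR_network_exponent_le.
under eq_integral do rewrite -sumEFin.
rewrite ge0_integral_sum // => [|j]; last exact/measurable_EFinP.
by apply: lte_sum_pinfty => j _; exact: augmented_params_expR_sqr_lty.
Qed.

End shallow_network.

Theorem proposition5p3
  (R : realType) (d : measure_display) (T : measurableType d)
  (P : probability T R)
  (n0 n2 : nat) (Hn2 : (0 < n2)%N)
  (Cb CW : R) (HCb : 0 <= Cb) (HCW : 0 < CW)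
  (sigma sigma' : R -> R)
  (Hmsigma : measurable_fun setT sigma) (Hmsigma' : measurable_fun setT sigma')
  (s : 'I_n2 -> bool)
  (Hderiv : (exists h, s h) ->
     {ae (@lebesgue_measure R), forall z : R, is_derive z (1 : R) sigma (sigma' z)})
  (A : finType) (x : A -> 'I_n0.+1 -> R)
  (b : T -> R) (W : 'I_n0.+1 -> T -> R) (Wh : 'I_n2 -> T -> R)
  (Hb : centered_normal_rv P b Cb)
  (HW : forall r, centered_normal_rv P (W r) (CW / n0.+1%:R))
  (HWh : forall h, centered_normal_rv P (Wh h) 1)
  (Hindep : mutually_independent P (all_params b W Wh))
  (M : R) (HM0 : 0 < M)
  (HM : forall (a : A) (bb : R) (w : 'I_n0.+1 -> R) (h : 'I_n2),
     `| sigma_s sigma sigma' (s h) (preact bb w (x a)) * (w ord0) ^+ (s h) |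
       <= M * (1 + `| preact bb w (x a) |)) :
  exists2 eps : R, 0 < eps &
    forall theta : A -> 'I_n2 -> R, (forall a h, `| theta a h | < eps) ->
      Upsilon P CW sigma sigma' s x b W Wh theta \is a fin_num.
Proof.
pose V := Cb + CW + 1; pose K := network_const n2 CW M x.
pose eps := (4 * (K * V + 1))^-1.
have KV0 : 0 <= K * V by rewrite mulr_ge0 ?network_const_ge0 ?ltW // /V; lra.
have eps0 : 0 < eps by rewrite invr_gt0 mulr_gt0 // ltr_wpDl.
have epsKV : eps * K * V <= 4^-1.
  rewrite -mulrA mulrC ler_pdivrMr ?mulr_gt0 ?ltr_wpDl //.
  by rewrite mulrA mulVf // mul1r; lra.
exists eps => // theta theta_eps; rewrite /Upsilon unlock.
apply: elog_fin_num.
  apply: integral_expR_gt0; last exact: measurable_network_exponent Hb HW HWh _.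
  by rewrite [X in X != _](_ : _ = 1%E) ?oner_neq0 //; exact: probability_setT.
exact: (integral_expR_network_exponent_lty (ltW HM0) HM HCb (ltW HCW)
  Hmsigma Hmsigma' Hb HW HWh (ltW eps0) epsKV (fun a h => ltW (theta_eps a h))).
Qed.
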